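(* Let $X$ and $Y$ be nonempty boundedly compact metric spaces (all closed balls are compact) with $d_{GH}(X,Y)<\infty$. Then $d^{us}_{GH}(X,Y)=d_{GH}(X,Y)$.
   Context: For a metric space, $|xy|$ denotes distance. A set-valued map $f:X\rightrightarrows Y$ assigns to each $x\in X$ a nonempty $f(x)\subseteq Y$ and is identified with its graph. A correspondence between $X$ and $Y$ is a subset $R\subseteq X\times Y$ whose projections to $X$ and to $Y$ are both surjective, regarded as the set-valued map $x\mapsto R(x)=\{y:(x,y)\in R\}$; $R^{-1}=\{(y,x):(x,y)\in R\}$; $\mathcal R(X,Y)$ is the set of all correspondences. The distortion of a nonempty $\sigma\subseteq X\times Y$ is $\operatorname{dis}\sigma=\sup\{||xx'|-|yy'||:(x,y),(x',y')\in\sigma\}\in[0,\infty]$, and $d_{GH}(X,Y)=\frac12\inf\{\operatorname{dis}R:R\in\mathcal R(X,Y)\}$. A set-valued map $f$ is upper semicontinuous if for every $x$ and every open $U\supseteq f(x)$ there is a neighborhood $V$ of $x$ with $f(x')\subseteq U$ for all $x'\in V$. $\mathcal R_{us}(X,Y)$ is the set of $R\in\mathcal R(X,Y)$ with both $R$ and $R^{-1}$ upper semicontinuous, and $d^{us}_{GH}(X,Y)=\frac12\inf\{\operatorname{dis}R:R\in\mathcal R_{us}(X,Y)\}$. *)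

From Stdlib Require Import Reals List.
From Coquelicot Require Import Coquelicot.
Open Scope R_scope.

Record MetricSpace := {
  carrier :> Type;
  dist : carrier -> carrier -> R;
  dist_ge0 : forall x y, 0 <= dist x y;
  dist_eq0 : forall x y, dist x y = 0 <-> x = y;
  dist_sym : forall x y, dist x y = dist y x;
  dist_tri : forall x y z, dist x z <= dist x y + dist y z
}.

Arguments dist {m} _ _.

Definition open_set {X : MetricSpace} (U : X -> Prop) : Prop :=
  forall x, U x -> exists eps, 0 < eps /\ forall y, dist x y < eps -> U y.

Definition compact_set {X : MetricSpace} (K : X -> Prop) : Prop :=
  forall (I : Type) (U : I -> X -> Prop),
    (forall i, open_set (U i)) ->
    (forall x, K x -> exists i, U i x) ->
    exists l : list I, forall x, K x -> exists i, In i l /\ U i x.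

Definition closed_ball {X : MetricSpace} (x : X) (r : R) : X -> Prop :=
  fun y => dist x y <= r.

Definition boundedly_compact (X : MetricSpace) : Prop :=
  forall (x : X) (r : R), compact_set (closed_ball x r).

Definition correspondence {X Y : MetricSpace} (Rel : X -> Y -> Prop) : Prop :=
  (forall x, exists y, Rel x y) /\ (forall y, exists x, Rel x y).

Definition rel_inv {X Y : Type} (Rel : X -> Y -> Prop) : Y -> X -> Prop :=
  fun y x => Rel x y.

Definition upper_semicontinuous {X Y : MetricSpace} (f : X -> Y -> Prop) : Prop :=
  forall (x : X) (U : Y -> Prop),
    open_set U -> (forall y, f x y -> U y) ->
    exists eps, 0 < eps /\
      forall x', dist x x' < eps -> forall y, f x' y -> U y.

Definition distortion {X Y : MetricSpace} (s : X -> Y -> Prop) : Rbar :=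
  Lub_Rbar (fun v => exists x y x' y', s x y /\ s x' y' /\
                       v = Rabs (dist x x' - dist y y')).

(* Infimum of the distortions (values +oo contribute nothing; inf of the
   empty set is +oo). *)
Definition GH_dist (X Y : MetricSpace) : Rbar :=
  Rbar_mult (/ 2) (Glb_Rbar (fun r => exists Rel : X -> Y -> Prop,
     correspondence Rel /\ distortion Rel = Finite r)).

Definition GH_dist_us (X Y : MetricSpace) : Rbar :=
  Rbar_mult (/ 2) (Glb_Rbar (fun r => exists Rel : X -> Y -> Prop,
     correspondence Rel /\ upper_semicontinuous Rel /\
     upper_semicontinuous (rel_inv Rel) /\ distortion Rel = Finite r)).

(* Replace a correspondence R by its closure in X × Y. The closure is still a
   correspondence, and its distortion is the same, since distances vary
   continuously. If R has finite distortion r, the closure sends a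
   neighbourhood of x into a closed ball of radius r + 1 around some y0 with
   R x y0; that ball is compact, and a finite subcover by U and by balls whose
   pairing with a small ball around x misses R yields upper semicontinuity.
   The same applies to the inverse correspondence, so every distortion value
   attained by a correspondence is attained by one with both directions upper
   semicontinuous, and the two infima coincide. *)
From Stdlib Require Import Reals Lra List Classical.
From Coquelicot Require Import Coquelicot.
Open Scope R_scope.

Lemma dist_self (A : MetricSpace) (x : A) : dist x x = 0.
Proof. exact (proj2 (dist_eq0 A x x) eq_refl). Qed.

Lemma Rabs_dist_sub_le (A : MetricSpace) (x x' a a' : A) :
  Rabs (dist x x' - dist a a') <= dist x a + dist x' a'.
Proof.
  pose proof (dist_tri A x a x'). pose proof (dist_tri A a a' x').
  pose proof (dist_tri A a x a'). pose proof (dist_tri A x x' a').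
  pose proof (dist_sym A x a). pose proof (dist_sym A x' a').
  apply Rabs_le. lra.
Qed.

Lemma open_ball (B : MetricSpace) (z : B) (r : R) :
  open_set (fun y : B => dist z y < r).
Proof.
  intros y Hy. exists (r - dist z y). split; [lra|].
  intros w Hw. pose proof (dist_tri B z y w). lra.
Qed.

Lemma list_pos_lower_bound {T : Type} (f : T -> R) (l : list T) :
  (forall t, 0 < f t) -> exists d, 0 < d /\ forall t, In t l -> d <= f t.
Proof.
  intros Hpos. induction l as [|t l [d [Hd Hl]]].
  - exists 1. split; [lra | intros t []].
  - exists (Rmin d (f t)). split; [now apply Rmin_pos|].
    intros s [<- | Hs]; [apply Rmin_r|].
    eapply Rle_trans; [apply Rmin_l | auto].
Qed.

Lemma Lub_Rbar_le_approx (E F : R -> Prop) :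
  (forall v, E v -> forall e, 0 < e -> exists w, F w /\ v <= w + e) ->
  Rbar_le (Lub_Rbar E) (Lub_Rbar F).
Proof.
  intros Happ. destruct (Lub_Rbar_correct E) as [_ lubE].
  destruct (Lub_Rbar_correct F) as [ubF _].
  apply lubE. intros v Ev.
  destruct (Lub_Rbar F) as [l| |]; simpl; auto.
  - apply le_epsilon. intros e He.
    destruct (Happ v Ev e He) as (w & Fw & Hvw). specialize (ubF w Fw). simpl in ubF. lra.
  - destruct (Happ v Ev 1 Rlt_0_1) as (w & Fw & _). exact (ubF w Fw).
Qed.

Lemma upper_semicontinuous_ext {A B : MetricSpace} (f g : A -> B -> Prop) :
  (forall x y, f x y <-> g x y) -> upper_semicontinuous f -> upper_semicontinuous g.
Proof.
  intros Hfg Hf x U HU Hsub.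
  destruct (Hf x U HU) as (e & He & H); [intros y Hy; apply Hsub, Hfg, Hy|].
  exists e. split; [exact He|]. intros x' Hx' y Hy. apply (H x' Hx'), Hfg, Hy.
Qed.

Definition distortion_values {A B : MetricSpace} (s : A -> B -> Prop) : R -> Prop :=
  fun v => exists x y x' y', s x y /\ s x' y' /\ v = Rabs (dist x x' - dist y y').

Lemma distortion_ub {A B : MetricSpace} (s : A -> B -> Prop) r x y x' y' :
  distortion s = Finite r -> s x y -> s x' y' -> Rabs (dist x x' - dist y y') <= r.
Proof.
  intros Hd Hxy Hxy'. destruct (Lub_Rbar_correct (distortion_values s)) as [ub _].
  change (Lub_Rbar (distortion_values s) = Finite r) in Hd. rewrite Hd in ub.
  apply ub. now exists x, y, x', y'.
Qed.

Lemma distortion_rel_inv {A B : MetricSpace} (s : A -> B -> Prop) :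
  distortion (rel_inv s) = distortion s.
Proof.
  apply Lub_Rbar_eqset. intros v. split.
  - intros (y & x & y' & x' & H1 & H2 & ->). exists x, y, x', y'.
    repeat split; auto. apply Rabs_minus_sym.
  - intros (x & y & x' & y' & H1 & H2 & ->). exists y, x, y', x'.
    repeat split; auto. apply Rabs_minus_sym.
Qed.

Definition rel_closure {A B : MetricSpace} (s : A -> B -> Prop) : A -> B -> Prop :=
  fun a b => forall e, 0 < e -> exists a' b', s a' b' /\ dist a a' < e /\ dist b b' < e.

Section RelClosure.
Context {A B : MetricSpace} (s : A -> B -> Prop).

Lemma rel_closure_incl a b : s a b -> rel_closure s a b.
Proof. intros H e He. exists a, b. rewrite !dist_self. auto. Qed.

Lemma rel_closure_inv b a : rel_inv (rel_closure s) b a <-> rel_closure (rel_inv s) b a.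
Proof.
  split; intros H e He.
  - destruct (H e He) as (a' & b' & ?). now exists b', a'.
  - destruct (H e He) as (b' & a' & ?). now exists a', b'.
Qed.

Lemma correspondence_rel_closure : correspondence s -> correspondence (rel_closure s).
Proof.
  intros [hA hB]. split.
  - intros x. destruct (hA x) as [y Hy]. exists y. now apply rel_closure_incl.
  - intros y. destruct (hB y) as [x Hx]. exists x. now apply rel_closure_incl.
Qed.

Lemma distortion_values_rel_closure_approx v :
  distortion_values (rel_closure s) v -> forall e, 0 < e ->
  exists w, distortion_values s w /\ v <= w + e.
Proof.
  intros (x & y & x' & y' & H1 & H2 & ->) e He.
  destruct (H1 (e/4)) as (a & b & Hab & Hxa & Hyb); [lra|].
  destruct (H2 (e/4)) as (a' & b' & Hab' & Hxa' & Hyb'); [lra|].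
  exists (Rabs (dist a a' - dist b b')). split; [now exists a, b, a', b'|].
  pose proof (Rabs_dist_sub_le A x x' a a'). pose proof (Rabs_dist_sub_le B y y' b b').
  pose proof (Rabs_triang (dist x x' - dist a a')
                (dist a a' - dist b b' + (dist b b' - dist y y'))) as T.
  pose proof (Rabs_triang (dist a a' - dist b b') (dist b b' - dist y y')).
  rewrite (Rabs_minus_sym (dist b b')) in *.
  replace (dist x x' - dist a a' + (dist a a' - dist b b' + (dist b b' - dist y y')))
    with (dist x x' - dist y y') in T by ring.
  lra.
Qed.

Lemma distortion_rel_closure : distortion (rel_closure s) = distortion s.
Proof.
  apply Rbar_le_antisym; apply Lub_Rbar_le_approx.
  - exact distortion_values_rel_closure_approx.
  - intros v (x & y & x' & y' & H1 & H2 & ->) e He.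
    exists (Rabs (dist x x' - dist y y')). split; [|lra].
    exists x, y, x', y'. auto using rel_closure_incl.
Qed.

Definition avoids (x : A) (z : B) (e : R) : Prop :=
  forall a b, s a b -> ~ (dist x a < e /\ dist z b < e).

Lemma not_rel_closure_avoids x z :
  ~ rel_closure s x z -> exists e, 0 < e /\ avoids x z e.
Proof.
  intros Hn. apply not_all_ex_not in Hn as [e He].
  apply imply_to_and in He as [He Hn]. exists e. split; [exact He|].
  intros a b Hab Hclose. apply Hn. now exists a, b.
Qed.

Lemma avoids_not_rel_closure x z e x' y' :
  avoids x z e -> dist x x' < e / 2 -> dist z y' < e / 2 -> ~ rel_closure s x' y'.
Proof.
  intros Hav Hx Hz Hcl.
  assert (He : 0 < e / 2) by (pose proof (dist_ge0 A x x'); lra).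
  destruct (Hcl (e/2) He) as (a & b & Hab & Ha & Hb).
  apply (Hav a b Hab). pose proof (dist_tri A x x' a). pose proof (dist_tri B z y' b).
  split; lra.
Qed.

Lemma rel_closure_near_in_ball r x y0 x' y' :
  distortion s = Finite r -> s x y0 -> dist x x' < 1 -> rel_closure s x' y' ->
  closed_ball y0 (r + 1) y'.
Proof.
  intros Hd Hxy0 Hx Hcl. apply le_epsilon. intros e He.
  destruct (Hcl (e/2)) as (a & b & Hab & Ha & Hb); [lra|].
  pose proof (distortion_ub s r x y0 a b Hd Hxy0 Hab) as Hr. apply Rabs_le_between in Hr.
  pose proof (dist_tri A x x' a). pose proof (dist_tri B y0 b y'). pose proof (dist_sym B b y').
  lra.
Qed.

Lemma upper_semicontinuous_rel_closure r :
  boundedly_compact B -> distortion s = Finite r -> (forall a, exists b, s a b) ->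
  upper_semicontinuous (rel_closure s).
Proof.
  intros cB Hd Hsurj x U HU Hsub. destruct (Hsurj x) as [y0 Hy0].
  pose (I := option {ze : B * R | 0 < snd ze /\ avoids x (fst ze) (snd ze)}).
  pose (V := fun i : I => match i with
    | None => U
    | Some p => fun y => dist (fst (proj1_sig p)) y < snd (proj1_sig p) / 2 end).
  destruct (cB y0 (r + 1) I V) as [l Hl].
  - intros [p|]; [apply open_ball | exact HU].
  - intros y _. destruct (classic (U y)) as [Uy | nUy]; [now exists None|].
    destruct (not_rel_closure_avoids x y) as (e & He & Hav); [intros C; now apply nUy, Hsub|].
    exists (Some (exist _ (y, e) (conj He Hav))). simpl. rewrite dist_self. lra.
  - destruct (list_pos_lower_bound (fun i : I => match i with
      | None => 1 | Some p => snd (proj1_sig p) end) l) as (d & Hd0 & Hdl).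
    { intros [p|]; [exact (proj1 (proj2_sig p)) | lra]. }
    exists (Rmin 1 (d / 2)). split; [apply Rmin_pos; lra|].
    intros x' Hx' y' Hy'. pose proof (Rmin_l 1 (d/2)). pose proof (Rmin_r 1 (d/2)).
    destruct (classic (U y')) as [Uy | nUy]; [exact Uy | exfalso].
    destruct (Hl y') as ([[[z e] [He Hav]]|] & Hi & HV);
      [apply (rel_closure_near_in_ball r x y0 x'); auto; lra | | contradiction].
    specialize (Hdl _ Hi). simpl in Hdl, HV.
    apply (avoids_not_rel_closure x z e x' y'); auto; lra.
Qed.

End RelClosure.

Theorem mainTheorem9 (X Y : MetricSpace)
  (hX : inhabited (carrier X)) (hY : inhabited (carrier Y))
  (cX : boundedly_compact X) (cY : boundedly_compact Y)
  (hfin : is_finite (GH_dist X Y)) :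
  GH_dist_us X Y = GH_dist X Y.
Proof.
  unfold GH_dist_us, GH_dist. f_equal. apply Glb_Rbar_eqset. intros r. split.
  - intros (s & Hs & _ & _ & Hd). now exists s.
  - intros (s & Hs & Hd). exists (rel_closure s). split; [|split; [|split]].
    + now apply correspondence_rel_closure.
    + exact (upper_semicontinuous_rel_closure s r cY Hd (proj1 Hs)).
    + apply (upper_semicontinuous_ext (rel_closure (rel_inv s))).
      { intros b a. symmetry. apply rel_closure_inv. }
      apply (upper_semicontinuous_rel_closure (rel_inv s) r cX).
      * now rewrite distortion_rel_inv.
      * exact (proj2 Hs).
    + now rewrite distortion_rel_closure.
Qed.
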